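(* Let $(\mathbb S,+,\cdot)$ be an S-Field. Then $q_0^*(0)$ does not exist, i.e. the Standard Base $q_0(0)$ of $\mathbb S_0$ is not Reversible.
   Context: An S-Structure is a triple $(\mathbb S,+,\cdot)$ where $\mathbb S$ is a set and $+,\cdot$ are binary operations on $\mathbb S$ such that: $(\mathbb S,+)$ is a commutative group with identity $0$ (the inverse of $s$ is written $-s$, and $s-t:=s+(-t)$); $\mathbb S$ is closed under $\cdot$; and there exists $s\in\mathbb S$ with $0\cdot s\neq 0$ or $s\cdot 0\neq 0$. Multiplication binds tighter than addition. The structures considered come with a distinguished element of $\mathbb S$ denoted $1$. It is Commutative if $s\cdot t=t\cdot s$ for all $s,t$. For a Commutative S-Structure and $\alpha\in\mathbb S$, put $\mathbb S_\alpha=\{s\in\mathbb S:0\cdot s=s\cdot 0=\alpha\}$ and $\Lambda=\{\alpha\in\mathbb S:\mathbb S_\alpha\neq\emptyset\}$. Wheel Distributive: $s\cdot(t+r)+(s\cdot 0)=(s\cdot t)+(s\cdot r)$ for all $s,t,r\in\mathbb S$. S-Associative: for all $m,n\in\mathbb S_0$ and $s\in\mathbb S$, $m\cdot(n\cdot s)=(m\cdot n)\cdot s-([(m-1)\cdot(n-1)]\cdot(0\cdot s))$. Base: if $\mathbb S_0\neq\emptyset$ and $\alpha\in\Lambda$, $q\in\mathbb S_\alpha$ is a Base for $\mathbb S_\alpha$ if $q+\beta\in\mathbb S_\alpha$ for all $\beta\in\mathbb S_0$ and every $s\in\mathbb S_\alpha$ equals $q+\beta$ for some $\beta\in\mathbb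 S_0$. Coordinated: $\mathbb S_0\neq\emptyset$ and every $\mathbb S_\alpha$ with $\alpha\in\Lambda$ has a Base. Standard Bases: a Coordinated Commutative S-Structure has Standard Bases if there is a specified element $q_0(1)\in\mathbb S_1$ which is a Base for $\mathbb S_1$, and for every $\alpha\in\Lambda$ the element $q_0(\alpha):=\alpha\cdot(q_0(1)+1)-1$ (the Standard Base of $\mathbb S_\alpha$) lies in $\mathbb S_\alpha$ and is a Base for $\mathbb S_\alpha$. An Essential S-Structure is an S-Structure that is Commutative, Wheel Distributive, S-Associative, has Standard Bases (in particular is Coordinated), satisfies $0,1\in\mathbb S_0$, and satisfies $\mathbb S_0=\{1\cdot x:x\in\mathbb S_0\}$. A Unity is an element $e\in\Lambda$ with $e\cdot s=s\cdot e=s$ for all $s\in\mathbb S$. Scalar Inverses: the structure has a Unity $e$ and for every $x\in\mathbb S_0$ with $x\neq 0$ there is $x^{-1}\in\mathbb S_0$ with $x\cdot x^{-1}=x^{-1}\cdot x=e$. An S-Ring is an Essential S-Structure with a Unity; an S-Field is an S-Ring with Scalar Inverses. Reversible: in an Essential S-Structure, for $\alpha\in\Lambda$, the Standard Base $q_0(\alpha)$ is Reversible if there exists $\alpha^*\in\Lambda$ with $q_0(1)=\alpha^*\cdot(q_0(\alpha)+\alpha)-\alpha$; in that case the Reversible Standard Base is $q_0^*(\alpha):=q_0(\alpha)$ (and $q_0^*(\alpha)$ is said not to exist otherwise). *)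

(* An S-Structure is modelled as a MathComp zmodType S
   (the commutative group (S,+) with 0, -, s - t := s + (-t)) together with
   an arbitrary binary operation [mul] (the S-Structure product, NOT the ring
   product), a distinguished element [one] (the element 1), and, for
   Standard Bases, the specified element [q01] (= q_0(1)). *)
From HB Require Import structures.
From mathcomp Require Import all_boot all_order all_algebra.
Set Implicit Arguments. Unset Strict Implicit. Unset Printing Implicit Defensive.
Import GRing.Theory.
Local Open Scope ring_scope.

Section SStructures.
Variables (S : zmodType) (mul : S -> S -> S) (one : S) (q01 : S).

(* closure under mul is automatic (mul : S -> S -> S) *)
Definition S_structure : Prop :=
  exists s : S, mul 0 s <> 0 \/ mul s 0 <> 0.

Definition commutative_S : Prop := forall s t : S, mul s t = mul t s.

Definition S_alpha (alpha s : S) : Prop := mul 0 s = alpha /\ mul s 0 = alpha.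

Definition Lambda (alpha : S) : Prop := exists s, S_alpha alpha s.

Definition wheel_distributive : Prop :=
  forall s t r : S, mul s (t + r) + mul s 0 = mul s t + mul s r.

Definition S_associative : Prop :=
  forall m n s : S, S_alpha 0 m -> S_alpha 0 n ->
    mul m (mul n s) = mul (mul m n) s - mul (mul (m - one) (n - one)) (mul 0 s).

Definition is_base (alpha q : S) : Prop :=
  S_alpha alpha q /\
  (forall beta, S_alpha 0 beta -> S_alpha alpha (q + beta)) /\
  (forall s, S_alpha alpha s -> exists beta, S_alpha 0 beta /\ s = q + beta).

Definition coordinated : Prop :=
  (exists x, S_alpha 0 x) /\ (forall alpha, Lambda alpha -> exists q, is_base alpha q).

Definition q0 (alpha : S) : S := mul alpha (q01 + one) - one.

Definition standard_bases : Prop :=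
  coordinated /\ commutative_S /\
  is_base one q01 /\ (forall alpha, Lambda alpha -> is_base alpha (q0 alpha)).

Definition essential : Prop :=
  S_structure /\ commutative_S /\ wheel_distributive /\ S_associative /\
  standard_bases /\ S_alpha 0 0 /\ S_alpha 0 one /\
  (forall y, S_alpha 0 y <-> exists x, S_alpha 0 x /\ y = mul one x).

Definition unity (e : S) : Prop :=
  Lambda e /\ forall s, mul e s = s /\ mul s e = s.

Definition scalar_inverses : Prop :=
  exists e, unity e /\
    forall x, S_alpha 0 x -> x <> 0 ->
      exists y, S_alpha 0 y /\ mul x y = e /\ mul y x = e.

Definition S_ring : Prop := essential /\ exists e, unity e.

Definition S_field : Prop := S_ring /\ scalar_inverses.

Definition reversible (alpha : S) : Prop :=
  Lambda alpha /\
  exists astar, Lambda astar /\ q01 = mul astar (q0 alpha + alpha) - alpha.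

End SStructures.

From mathcomp Require Import all_boot all_order all_algebra.
Local Open Scope ring_scope.
Import GRing.Theory.
Set Implicit Arguments.

(* Wheel distributivity makes [s |-> 0 . s] additive, so q_0(0) = 0 . q_0(1) + 0 . 1 - 1 = 0,
   and S-associativity applied to the unity e and to 1 (both in S_0) shows 0 . (0 . s) = 0.
   A reversal q_0(1) = a . q_0(0) = 0 . a would then give 1 = 0 . q_0(1) = 0 . (0 . a) = 0,
   hence S_0 = 1 . S_0 = 0 . S_0 = {0} and the unity is 0.  But then s = 0 . (0 . s) = 0
   for every s, so the product vanishes identically, which an S-Structure forbids. *)

Section ZeroProduct.
Variables (S : zmodType) (mul : S -> S -> S) (one : S).

Lemma unity_S_alpha0 (e : S) : unity mul e -> S_alpha mul 0 e.
Proof. by case=> _ unit_e; split; [exact: (unit_e 0).2 | exact: (unit_e 0).1]. Qed.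

Lemma unity0_not_S_structure :
  unity mul 0 -> (forall s, mul 0 (mul 0 s) = 0) -> ~ S_structure mul.
Proof.
move=> [_ unit0] mul0_nil [s nonzero].
have trivial (t : S) : t = 0 by rewrite -[t](unit0 t).1 -[t](unit0 t).1 mul0_nil.
by case: nonzero; apply; apply: trivial.
Qed.

Hypotheses (mulD : wheel_distributive mul) (mul00 : mul 0 0 = 0).

Lemma mul0D (t r : S) : mul 0 (t + r) = mul 0 t + mul 0 r.
Proof. by rewrite -mulD mul00 addr0. Qed.

Lemma mul0B (t r : S) : mul 0 (t - r) = mul 0 t - mul 0 r.
Proof. by apply: (addIr (mul 0 r)); rewrite -mul0D !subrK. Qed.

Lemma q0_0 (q01 : S) : mul 0 q01 = one -> mul 0 one = 0 -> q0 mul one q01 0 = 0.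
Proof. by move=> q01_S1 one_S0; rewrite /q0 mul0D q01_S1 one_S0 addr0 subrr. Qed.

Hypotheses (mulC : commutative_S mul) (mulA : S_associative mul one).
Hypothesis one_S0 : S_alpha mul 0 one.

Lemma mul0_mul0 (e : S) : unity mul e -> forall s, mul 0 (mul 0 s) = 0.
Proof.
move=> e_unity s; have [_ unit_e] := e_unity.
have [e0 _] := unity_S_alpha0 e_unity.
have corr0 : mul (e - one) (one - one) = 0.
  by rewrite subrr mulC mul0B e0 one_S0.1 subrr.
have := mulA s (unity_S_alpha0 e_unity) one_S0.
rewrite (unit_e _).1 (unit_e _).1 corr0 => /eqP.
by rewrite -subr_eq0 opprB addrC subrK => /eqP.
Qed.

Lemma reversible0_one_eq0 (q01 : S) :
  mul 0 q01 = one -> (forall s, mul 0 (mul 0 s) = 0) ->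
  reversible mul one q01 0 -> one = 0.
Proof.
move=> q01_S1 mul0_nil [_ [a [_ q01_rev]]].
move: q01_rev; rewrite (q0_0 q01_S1 one_S0.1) !addr0 subr0 mulC => q01_rev.
by rewrite -q01_S1 q01_rev mul0_nil.
Qed.

End ZeroProduct.

Theorem proposition4p2p2 (S : zmodType) (mul : S -> S -> S) (one q01 : S) :
  S_field mul one q01 -> ~ reversible mul one q01 0.
Proof.
move=> [[[Sstr [mulC [mulD [mulA [[_ [_ [[[q01_S1 _] _] _]]] [[mul00 _] [one_S0 S0E]]]]]]]
  [e e_unity]] _] rev0.
have mul0_nil := mul0_mul0 mulD mul00 mulC mulA one_S0 e_unity.
have one0 := reversible0_one_eq0 mulD mul00 mulC one_S0 q01_S1 mul0_nil rev0.
have e0 : e = 0.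
  have [x [[x_S0 _] ->]] := (S0E e).1 (unity_S_alpha0 e_unity).
  by rewrite one0 x_S0.
by rewrite e0 in e_unity; exact: (unity0_not_S_structure e_unity mul0_nil Sstr).
Qed.
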